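(* Let $(X,d,m)$ be $D$-Ahlfors regular, fix $o\in X$ and set $d(x)=1+d(o,x)$. For every $a\in(0,1]$ there exists $C_a\in(0,\infty)$ such that, for every $t\in(0,1/2]$ and every nonnegative $g\in L^1_{\mathrm{loc}}(X)$, there is a finite collection $\{x_j\}_j$ of points of $X$ such that: $t\,d(x_j)\le1$ for all $j$; $\sum_j\mathbf 1_{B(x_j,td(x_j))}(x)\le C_a$ for all $x\in X$; $\sum_j\mathbf 1_{B(x_j,atd(x_j))}(x)\ge1$ whenever $t\,d(x)\le1/2$; and $g(x_j)\le C_a\,m(B(x_j,td(x_j)))^{-1}\int_{B(x_j,td(x_j))}g\,dm$ for all $j$.
   Context: $(X,d,m)$ is $D$-Ahlfors regular ($D>0$) if there is $A\ge1$ with $A^{-1}r^D\le m(B(x,r))\le Ar^D$ for all $x\in X$, $r\ge0$, where $B(x,r)$ is the metric ball. *)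

From HB Require Import structures.
From mathcomp Require Import all_boot all_order all_algebra.
From mathcomp Require Import all_classical all_reals all_analysis.
Set Implicit Arguments. Unset Strict Implicit. Unset Printing Implicit Defensive.
Import Order.TTheory GRing.Theory Num.Theory.
Local Open Scope classical_set_scope.
Local Open Scope ring_scope.

Definition mball {X : Type} {R : realType} (dist : X -> X -> R) (x : X) (r : R)
  : set X := [set y | dist x y < r].

Definition is_metric {X : Type} {R : realType} (dist : X -> X -> R) : Prop :=
  [/\ forall x y, 0 <= dist x y,
      forall x y, dist x y = 0 <-> x = y,
      forall x y, dist x y = dist y x &
      forall x y z, dist x z <= dist x y + dist y z].

Definition ahlfors_regular {d : measure_display} {X : measurableType d}
  {R : realType} (dist : X -> X -> R) (m : {measure set X -> \bar R}) (D : R)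
  : Prop :=
  exists A : R, 1 <= A /\
    forall (x : X) (r : R), 0 <= r ->
      ((A^-1 * r `^ D)%:E <= m (mball dist x r))%E /\
      (m (mball dist x r) <= (A * r `^ D)%:E)%E.

Definition loc_integrable {d : measure_display} {X : measurableType d}
  {R : realType} (dist : X -> X -> R) (m : {measure set X -> \bar R})
  (g : X -> R) : Prop :=
  measurable_fun setT g /\
  forall x : X, exists2 r : R, 0 < r &
    m.-integrable (mball dist x r) (fun y => (g y)%:E).

From HB Require Import structures.
From mathcomp Require Import all_boot all_order all_algebra.
From mathcomp Require Import all_classical all_reals all_analysis.
From mathcomp Require Import ring lra measurable_realfun.
Set Implicit Arguments. Unset Strict Implicit. Unset Printing Implicit Defensive.
Import Order.TTheory GRing.Theory Num.Theory.
Local Open Scope classical_set_scope.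
Local Open Scope ring_scope.

(* Put eps = a t / 8 and consider the region {t d <= 1/2}.
   - A family of points of the region that are pairwise eps d-separated has
     bounded size (volume packing in the ball B(o, 1/t)), so a maximal such
     family S exists; by maximality S is a 2 eps d-net of the region.
   - Each y in S is moved to a point f y of B(y, eps d(y)) where g is at most
     twice its mean over that small ball; Ahlfors regularity compares this
     ball with B(f y, t d(f y)), which contains it, giving the mean estimate.
   - The balls B(f y, a t d(f y)) cover the region because S is a net, and
     the balls B(f y, t d(f y)) overlap boundedly because the net points
     whose balls contain x are separated at the scale of x and crowd in a
     ball of radius 4 t d(x) around x (packing again). *)

Section MetricFacts.
Variables (R : realType) (X : Type) (dist : X -> X -> R).
Hypothesis hm : is_metric dist.

Lemma dist_ge0 x y : 0 <= dist x y. Proof. by case: hm. Qed.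
Lemma dist_xx x : dist x x = 0. Proof. by case: hm => _ h _ _; apply/h. Qed.
Lemma dist_sym x y : dist x y = dist y x. Proof. by case: hm. Qed.
Lemma dist_tri x y z : dist x z <= dist x y + dist y z. Proof. by case: hm. Qed.

Lemma mball_disjoint x y r : 2 * r <= dist x y ->
  mball dist x r `&` mball dist y r = set0.
Proof.
move=> sep; rewrite -subset0 => w []; rewrite /mball /= => xw yw.
have := dist_tri x w y; rewrite (dist_sym w y) => tri.
have : dist x y < dist x y by lra.
by rewrite ltxx.
Qed.

Variable o : X.
Local Notation wt x := (1 + dist o x).

(* The weight d(x) = 1 + d(o,x) is 1-Lipschitz, hence comparable at nearby
   points: if x lies within c d(y) of y, with c <= 1/2, then d(x) and d(y)
   agree up to the factors 1 + c and 2. *)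
Lemma weight_near x y c : 0 <= c -> c <= 2^-1 -> dist x y < c * wt y ->
  wt x <= (1 + c) * wt y /\ wt y <= 2 * wt x.
Proof.
move=> c0 c2 xy; have := dist_tri o y x; have := dist_tri o x y.
have := dist_ge0 o y; rewrite (dist_sym y x) mulrDl mul1r.
have : c * wt y <= 2^-1 * wt y by rewrite ler_wpM2r //; have := dist_ge0 o y; lra.
lra.
Qed.

End MetricFacts.

Section MaximalSeparated.
Variables (T : eqType) (P : T -> Prop) (far : T -> T -> Prop).

Definition separated (S : seq T) : Prop :=
  [/\ uniq S, {in S, forall y, P y} & {in S &, forall y y', y != y' -> far y y'}].

(* If separated families have bounded size, one of maximal size cannot be
   extended by any point of P. *)
Lemma maximal_separated_exists (N : nat) :
  (forall S, separated S -> (size S <= N)%N) ->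
  exists2 S, separated S & forall z, P z -> ~ separated (z :: S).
Proof.
move=> bounded.
pose has_size n := `[< exists2 S, separated S & size S = n >].
have sep_nil : separated [::] by split => // y; rewrite in_nil.
have ex0 : exists n, has_size n by exists 0%N; apply/asboolP; exists [::].
have ub n : has_size n -> (n <= N)%N by move=> /asboolP [S /bounded + <-].
case: (ex_maxnP ex0 ub) => n /asboolP [S sepS <-] maxS.
exists S => // z _ sepzS.
have /maxS : has_size (size (z :: S)) by apply/asboolP; exists (z :: S).
by rewrite ltnn.
Qed.

End MaximalSeparated.

Section WeightedNets.
Variables (R : realType) (X : eqType) (dist : X -> X -> R) (o : X).
Hypothesis hm : is_metric dist.
Local Notation wt x := (1 + dist o x).

Definition inner_region (t : R) (y : X) : Prop := t * wt y <= 2^-1.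

Definition weighted_far (c : R) (y y' : X) : Prop := c * wt y <= dist y y'.

Lemma maximal_net_covers (P : X -> Prop) (c : R) (S : seq X) :
  0 < c -> c <= 2^-1 -> separated P (weighted_far c) S ->
  (forall z, P z -> ~ separated P (weighted_far c) (z :: S)) ->
  forall z, P z -> exists2 y, y \in S & dist z y < 2 * c * wt y.
Proof.
move=> c0 c2 [uS PS farS] maxS z Pz; apply: contrapT => ncov.
have far_z y : y \in S -> 2 * c * wt y <= dist z y.
  by move=> yS; rewrite leNgt; apply/negP => zy; apply: ncov; exists y.
have wt_pos y : 0 < c * wt y by rewrite mulr_gt0 //; have := dist_ge0 hm o y; lra.
apply: (maxS z Pz); split.
- rewrite /= uS andbT; apply/negP => zS.
  by have := far_z z zS; rewrite dist_xx // -mulrA; have := wt_pos z; lra.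
- by move=> y; rewrite in_cons => /predU1P [->|/PS].
- move=> y y'; rewrite /weighted_far !in_cons.
  move=> /predU1P[->|yS] /predU1P[->|y'S]; rewrite ?eqxx // => neq.
  + have := far_z y' y'S; have := dist_tri hm o y' z; rewrite (dist_sym hm y' z).
    have := dist_ge0 hm z y'; have := wt_pos y'; nra.
  + by have := far_z y yS; rewrite (dist_sym hm z y) -mulrA; have := wt_pos y; lra.
  + exact: farS.
Qed.

End WeightedNets.

Section TwiceAverage.
Variables (d : measure_display) (T : measurableType d) (R : realType)
  (mu : {measure set T -> \bar R}).

Lemma null_of_integral_eq0 (B : set T) (f : T -> R) : measurable B ->
  measurable_fun B f -> (forall x, B x -> 0 < f x) ->
  (\int[mu]_(x in B) (f x)%:E = 0)%E -> mu B = 0.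
Proof.
move=> mB mf fpos int0.
have mfE : measurable_fun B (EFin \o f) by exact/measurable_EFinP.
have : (\int[mu]_(x in B) `|(f x)%:E| = 0)%E.
  rewrite -int0; apply: eq_integral => x; rewrite inE => Bx.
  by rewrite gee0_abs // lee_fin ltW // fpos.
case/(ae_eq_integral_abs mu mB mfE) => N [mN muN0 sN].
apply/eqP; rewrite eq_le measure_ge0 andbT -muN0.
apply: le_measure; rewrite ?inE // => x Bx; apply: sN => /= /(_ Bx) [fx0].
by have := fpos x Bx; rewrite fx0 ltxx.
Qed.

Lemma le_twice_average (B : set T) (f : T -> R) : measurable B ->
  measurable_fun B f -> (forall x, B x -> 0 <= f x) ->
  (0 < mu B)%E -> (mu B < +oo)%E ->
  exists2 x, B x &
    ((f x)%:E <= (2 / fine (mu B))%:E * \int[mu]_(y in B) (f y)%:E)%E.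
Proof.
move=> mB mf f0 muB0 muBoo.
have [M muBM] : exists M, mu B = M%:E.
  by move: muB0 muBoo; case: (mu B) => [M| |] //; exists M.
rewrite muBM /=; move: muB0; rewrite muBM lte_fin => M0.
have c0 : 0 < 2 / M by rewrite divr_gt0.
have mfE : measurable_fun B (EFin \o f) by exact/measurable_EFinP.
have I0 : (0 <= \int[mu]_(y in B) (f y)%:E)%E.
  by apply: integral_ge0 => x Bx; rewrite lee_fin f0.
move: I0; case defI : (\int[mu]_(y in B) (f y)%:E)%E => [I| |] // I0; last first.
  have [x Bx] : B !=set0.
    by apply/set0P/negP => /eqP B0; move: M0; rewrite -lte_fin -muBM B0 measure0 ltxx.
  by exists x => //; rewrite gt0_muley ?leey ?lte_fin.
rewrite lee_fin in I0; apply: contrapT => small.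
have big x : B x -> 2 / M * I < f x.
  by move=> Bx; rewrite ltNge -lee_fin EFinM; apply/negP => le; apply: small; exists x.
(* integrating the strict lower bound gives 2 I <= I, so I = 0 *)
have I_eq0 : I = 0.
  suff : ((2 * I)%:E <= I%:E)%E by rewrite lee_fin; lra.
  have -> : (2 * I)%:E = (\int[mu]_(x in B) (cst (2 / M * I)%:E) x)%E.
    by rewrite integral_cst // muBM -EFinM mulrAC divfK // gt_eqF.
  rewrite -defI; apply: ge0_le_integral => //.
  - by move=> x _; rewrite lee_fin mulr_ge0 // ltW.
  - by move=> x Bx; rewrite lee_fin ltW // big.
have fpos x : B x -> 0 < f x by move=> /big; rewrite I_eq0 mulr0.
have := null_of_integral_eq0 mB mf fpos; rewrite defI I_eq0 muBM => /(_ erefl).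
by move=> [M_eq0]; move: M0; rewrite M_eq0 ltxx.
Qed.

End TwiceAverage.

Section AhlforsRegular.
Variables (R : realType) (d : measure_display) (X : measurableType d)
  (dist : X -> X -> R) (m : {measure set X -> \bar R}) (D A : R).
Hypotheses (hm : is_metric dist)
  (mball_meas : forall x r, measurable (mball dist x r)) (A1 : 1 <= A)
  (hA : forall x r, 0 <= r ->
     ((A^-1 * r `^ D)%:E <= m (mball dist x r))%E /\
     (m (mball dist x r) <= (A * r `^ D)%:E)%E).

Lemma A_gt0 : 0 < A. Proof. exact: lt_le_trans ltr01 A1. Qed.

Lemma ball_measure x r : 0 <= r -> exists M : R,
  [/\ m (mball dist x r) = M%:E, A^-1 * r `^ D <= M & M <= A * r `^ D].
Proof.
move=> r0; have [] := hA x r0.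
by case: (m (mball dist x r)) => [M| |] // lb ub; exists M.
Qed.

Lemma disjoint_balls_measure (s : seq X) (r : R) : 0 < r -> uniq s ->
  {in s &, forall y y', y != y' -> 2 * r <= dist y y'} ->
  (((size s)%:R * (A^-1 * r `^ D))%:E <=
     m (\big[setU/set0]_(y <- s) mball dist y r))%E.
Proof.
move=> r0; elim: s => [|y s IH] /=; first by rewrite big_nil mul0r measure0.
case/andP => yNs us sep; rewrite big_cons.
have sep_s : {in s &, forall y y', y != y' -> 2 * r <= dist y y'}.
  by move=> z z' zs z's; apply: sep; rewrite in_cons ?zs ?z's orbT.
rewrite measureU //; last 2 first.
- exact: bigsetU_measurable.
- rewrite -bigcup_seq -subset0 => w [yw [z /= zs zw]].
  have yz : y != z by apply: contraNneq yNs => ->.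
  have sep_yz : 2 * r <= dist y z by apply: sep; rewrite ?in_cons ?zs ?eqxx ?orbT.
  by move: (mball_disjoint hm sep_yz); rewrite -subset0 => /(_ w (conj yw zw)).
rewrite -addn1 natrD mulrDl mul1r EFinD addeC.
by apply: leeD; [case: (hA y (ltW r0))|exact: IH].
Qed.

Lemma packing (s : seq X) (x0 : X) (r K : R) : 0 < r -> 0 <= K -> uniq s ->
  {in s &, forall y y', y != y' -> 2 * r <= dist y y'} ->
  {in s, forall y, dist x0 y + r <= K * r} ->
  (size s)%:R <= A ^+ 2 * K `^ D.
Proof.
move=> r0 K0 us sep inside.
have sub : \big[setU/set0]_(y <- s) mball dist y r `<=` mball dist x0 (K * r).
  rewrite -bigcup_seq => w [y /= ys yw]; rewrite /mball /= in yw *.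
  by have := dist_tri hm x0 y w; have := inside y ys; lra.
have Kr0 : 0 <= K * r by rewrite mulr_ge0 // ltW.
have mU : \big[setU/set0]_(y <- s) mball dist y r \in measurable.
  by rewrite inE; apply: bigsetU_measurable.
have mB : mball dist x0 (K * r) \in measurable by rewrite inE.
have := le_trans (disjoint_balls_measure r0 us sep)
  (le_trans (le_measure m mU mB sub) (proj2 (hA x0 Kr0))).
rewrite lee_fin powRM //; last exact: ltW.
have p0 : 0 < r `^ D by exact: powR_gt0.
have A0 := A_gt0.
move: (size s)%:R p0 => n p0 bound.
have -> : n = A * (n * A^-1) by rewrite mulrCA mulfV ?gt_eqF ?mulr1.
by rewrite expr2 -mulrA ler_pM2l // -(ler_pM2r p0) -!mulrA.
Qed.

Lemma good_center (g : X -> R) (y : X) (rho K C : R) :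
  0 <= D -> measurable_fun setT g -> (forall x, 0 <= g x) -> 0 < rho -> 0 <= K ->
  2 * A ^+ 2 * K `^ D <= C ->
  exists2 x, dist y x < rho & forall r,
    mball dist y rho `<=` mball dist x r -> r <= K * rho ->
    ((g x)%:E <= (C / fine (m (mball dist x r)))%:E *
                 \int[m]_(w in mball dist x r) (g w)%:E)%E.
Proof.
move=> D0 mg g0 rho0 K0 KC; have A0 := A_gt0.
have [My [mBy lbY _]] := ball_measure y (ltW rho0).
have My0 : 0 < My.
  by apply: lt_le_trans lbY; rewrite mulr_gt0 ?invr_gt0 ?powR_gt0.
have mBy0 : (0 < m (mball dist y rho))%E by rewrite mBy lte_fin.
have mByoo : (m (mball dist y rho) < +oo)%E by rewrite mBy ltry.
have [x Bx gx] := le_twice_average (mball_meas y rho)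
  (measurable_funS measurableT (@subsetT _ _) mg) (fun x _ => g0 x) mBy0 mByoo.
exists x => // r sub rK.
have r0 : 0 < r.
  have /sub : mball dist y rho y by rewrite /mball /= dist_xx.
  by rewrite /mball /=; have := dist_ge0 hm x y; lra.
have [Mx [mBx lbX ubX]] := ball_measure x (ltW r0).
have Mx0 : 0 < Mx.
  by apply: lt_le_trans lbX; rewrite mulr_gt0 ?invr_gt0 ?powR_gt0.
have int_le : (\int[m]_(w in mball dist y rho) (g w)%:E <=
              \int[m]_(w in mball dist x r) (g w)%:E)%E.
  apply: ge0_subset_integral => //; last by move=> w _; rewrite lee_fin.
  by apply/measurable_EFinP; apply: measurable_funS mg.
have ball_ratio : Mx <= A ^+ 2 * (K `^ D * My).
  have rD : r `^ D <= K `^ D * rho `^ D.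
    rewrite -powRM ?(ltW rho0) //; apply: ge0_ler_powR => //.
    - by rewrite nnegrE ltW.
    - by rewrite nnegrE mulr_ge0 // ltW.
  have rhoD : rho `^ D <= A * My.
    by have := ler_wpM2l (ltW A0) lbY; rewrite mulrA mulfV ?gt_eqF ?mul1r.
  apply: (le_trans ubX); rewrite expr2 -mulrA ler_wpM2l ?(ltW A0) // mulrCA.
  by apply: (le_trans rD); rewrite ler_wpM2l ?powR_ge0.
rewrite mBx /=; rewrite mBy /= in gx; apply: (le_trans gx).
apply: lee_pmul => //.
- by rewrite lee_fin divr_ge0 // ltW.
- by apply: integral_ge0 => w _; rewrite lee_fin.
- rewrite lee_fin ler_pdivlMr // mulrAC ler_pdivrMr //.
  have := ler_wpM2r (ltW My0) KC; rewrite -!mulrA in KC *; lra.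
Qed.

Lemma separated_size_bounded (o : X) (t c : R) : 0 < t -> 0 < c ->
  exists N, forall S,
    separated (inner_region dist o t) (weighted_far dist o c) S -> (size S <= N)%N.
Proof.
move=> t0 c0; pose r := c / 2; pose K := (t * c)^-1 + 1.
have r0 : 0 < r by rewrite divr_gt0.
have K0 : 0 <= K by rewrite addr_ge0 // invr_ge0 mulr_ge0 // ltW.
have bound_ge0 : 0 <= A ^+ 2 * K `^ D by rewrite mulr_ge0 ?exprn_ge0 ?powR_ge0 // ltW // A_gt0.
exists (Num.Def.archi_bound (A ^+ 2 * K `^ D)) => S [uS inS farS].
suff : (size S)%:R <= A ^+ 2 * K `^ D.
  by move=> /le_lt_trans /(_ (archi_boundP bound_ge0)); rewrite ltr_nat => /ltnW.
apply: (packing (x0 := o) r0 K0 uS).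
- move=> y y' yS y'S /(farS y y' yS y'S); rewrite /weighted_far /r.
  have : c <= c * (1 + dist o y) by rewrite ler_pMr // lerDl dist_ge0.
  lra.
- move=> y /inS; rewrite /inner_region => yin; rewrite -(ler_pM2l t0).
  have -> : t * (K * r) = 2^-1 + t * r by rewrite /K /r; field; rewrite ?gt_eqF.
  by rewrite mulrDr; rewrite mulrDr mulr1 in yin; have := dist_ge0 hm o y; lra.
Qed.

Section ShiftedNet.
Variables (o : X) (a t eps : R).
Hypotheses (a0 : 0 < a) (a1 : a <= 1) (t0 : 0 < t) (t2 : t <= 2^-1)
  (eps_def : 8 * eps = a * t).
Local Notation wt x := (1 + dist o x).

Let eps_gt0 : 0 < eps.
Proof. have := eps_def; have : 0 < a * t by rewrite mulr_gt0. lra. Qed.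
Let eps_le : eps <= t / 8.
Proof.
have := eps_def; have : a * t <= t by rewrite -[leRHS]mul1r ler_wpM2r // ltW.
lra.
Qed.
Let eps_eq : eps = a * t / 8. Proof. by rewrite -eps_def; field. Qed.

Lemma good_shift (g : X -> R) (C : R) : 0 <= D -> measurable_fun setT g ->
  (forall x, 0 <= g x) -> 2 * A ^+ 2 * (16 / a) `^ D <= C ->
  forall y, exists x, dist y x < eps * wt y /\
    ((g x)%:E <= (C / fine (m (mball dist x (t * wt x))))%:E *
                 \int[m]_(w in mball dist x (t * wt x)) (g w)%:E)%E.
Proof.
move=> D0 mg g0 KC y; have wy1 : 1 <= wt y by rewrite lerDl dist_ge0.
have rho0 : 0 < eps * wt y by rewrite mulr_gt0 //; lra.
have K0 : 0 <= 16 / a by rewrite divr_ge0 // ltW.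
have [x yx bound] := good_center y D0 mg g0 rho0 K0 KC.
exists x; split => //; rewrite (dist_sym hm) in yx.
have [wx wy] : wt x <= (1 + eps) * wt y /\ wt y <= 2 * wt x.
  by apply: (weight_near hm) (ltW eps_gt0) _ yx; have := eps_le; have := t2; lra.
have epsy : eps * wt y <= eps * (2 * wt x) by rewrite ler_wpM2l // ltW.
have epsx : eps * wt x <= t / 8 * wt x by rewrite ler_wpM2r ?eps_le //; lra.
apply: bound.
- move=> w; rewrite /mball /= => yw.
  have : 0 < t * wt x by rewrite mulr_gt0 // ltr_pwDl ?dist_ge0.
  have := dist_tri hm x y w; lra.
- have -> : 16 / a * (eps * wt y) = t * (2 * wt y).
    by rewrite eps_eq; field; rewrite gt_eqF.
  rewrite ler_wpM2l ?(ltW t0) //; rewrite mulrDl mul1r in wx.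
  have : eps * wt y <= wt y.
    by apply: ler_piMl; [lra | have := eps_le; have := t2; lra].
  lra.
Qed.

Lemma shifted_net_exists (g : X -> R) (C : R) : 0 <= D ->
  measurable_fun setT g -> (forall x, 0 <= g x) ->
  2 * A ^+ 2 * (16 / a) `^ D <= C ->
  exists S, exists f : X -> X,
    [/\ separated (inner_region dist o t) (weighted_far dist o eps) S,
        forall z, inner_region dist o t z ->
          exists2 y, y \in S & dist z y < 2 * eps * wt y,
        forall y, dist y (f y) < eps * wt y &
        forall y, ((g (f y))%:E <=
          (C / fine (m (mball dist (f y) (t * wt (f y)))))%:E *
          \int[m]_(w in mball dist (f y) (t * wt (f y))) (g w)%:E)%E].
Proof.
move=> D0 mg g0 KC.
have eps_half : eps <= 2^-1 by have := eps_le; have := t2; lra.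
have [N bounded] := separated_size_bounded o t0 eps_gt0.
have [S sepS maxS] := maximal_separated_exists bounded.
have [f /all_and2 [f_near f_mean]] := choice (good_shift D0 mg g0 KC).
by exists S, f; split => //; exact (maximal_net_covers hm eps_gt0 eps_half sepS maxS).
Qed.

Variables (S : seq X) (f : X -> X).
Hypothesis S_sep : separated (inner_region dist o t) (weighted_far dist o eps) S.
Hypothesis S_net : forall z, inner_region dist o t z ->
  exists2 y, y \in S & dist z y < 2 * eps * wt y.
Hypothesis f_near : forall y, dist y (f y) < eps * wt y.

Let shift_weight y : wt (f y) <= (1 + eps) * wt y /\ wt y <= 2 * wt (f y).
Proof.
apply: (weight_near hm) (ltW eps_gt0) _ _; last by rewrite (dist_sym hm).
by have := eps_le; have := t2; lra.
Qed.

Lemma shifted_in_range y : inner_region dist o t y -> t * wt (f y) <= 1.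
Proof.
rewrite /inner_region => yin; have [up _] := shift_weight y.
have p0 : 0 <= t * wt y by rewrite mulr_ge0 ?(ltW t0) // addr_ge0 ?dist_ge0.
have h1 : t * wt (f y) <= (1 + eps) * (t * wt y).
  by rewrite mulrCA ler_wpM2l // ltW.
have h2 : eps * (t * wt y) <= t * wt y.
  by rewrite ler_piMl //; have := eps_le; have := t2; lra.
by rewrite mulrDl mul1r in h1; lra.
Qed.

(* The enlarged balls B(f y, a t d(f y)) cover the region, since
   a t = 8 eps exceeds the net radius plus the shift. *)
Lemma shifted_cover x : inner_region dist o t x ->
  exists2 y, y \in S & dist (f y) x < a * t * wt (f y).
Proof.
move=> /S_net [y yS xy]; exists y => //; rewrite -eps_def.
have := f_near y; have [_ wy] := shift_weight y.
have := dist_tri hm (f y) y x; rewrite (dist_sym hm (f y) y) (dist_sym hm y x).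
have : eps * wt y <= eps * (2 * wt (f y)) by rewrite ler_wpM2l // ltW.
have : 0 < eps * wt (f y) by rewrite mulr_gt0 // ltr_pwDl ?dist_ge0.
lra.
Qed.

Let overlap_near x y : dist (f y) x < t * wt (f y) ->
  wt x <= 2 * wt y /\ dist x y + eps * wt x / 4 <= 4 * t * wt x.
Proof.
move=> fyx; have [wfy wy] := shift_weight y.
have [wx wfy'] : wt x <= (1 + t) * wt (f y) /\ wt (f y) <= 2 * wt x.
  by apply: (weight_near hm) (ltW t0) t2 _; rewrite (dist_sym hm).
have wx0 : 0 <= wt x by rewrite addr_ge0 ?dist_ge0.
have wy0 : 0 <= wt y by rewrite addr_ge0 ?dist_ge0.
have wfy0 : 0 <= wt (f y) by rewrite addr_ge0 ?dist_ge0.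
rewrite !mulrDl !mul1r in wfy wx.
have tw : t * wt (f y) <= 2^-1 * wt (f y) by rewrite ler_wpM2r.
have ev : eps * wt y <= 16^-1 * wt y.
  by rewrite ler_wpM2r //; have := eps_le; have := t2; lra.
split; first lra.
have tw' : t * wt (f y) <= t * (2 * wt x) by rewrite ler_wpM2l // ltW.
have ev' : eps * wt y <= eps * (2 * wt (f y)) by rewrite ler_wpM2l // ltW.
have ew : eps * wt (f y) <= eps * (2 * wt x) by rewrite ler_wpM2l // ltW.
have eu : eps * wt x <= t / 8 * wt x by rewrite ler_wpM2r.
have := dist_tri hm x (f y) y; rewrite (dist_sym hm x (f y)) (dist_sym hm (f y) y).
have : 0 <= t * wt x by rewrite mulr_ge0 // ltW.
have := f_near y; lra.
Qed.

(* Bounded overlap: x lies in at most A^2 (128/a)^D of the balls around the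
   shifted centres, since the corresponding net points are separated at the
   scale of x and lie in a ball of comparable radius around x. *)
Lemma shifted_overlap x :
  (size [seq y <- S | `[< mball dist (f y) (t * wt (f y)) x >]])%:R <=
    A ^+ 2 * (128 / a) `^ D.
Proof.
case: S_sep => uS _ farS.
have wx1 : 1 <= wt x by rewrite lerDl dist_ge0.
set S' := [seq y <- S | _].
have inS' y : y \in S' -> y \in S /\ dist (f y) x < t * wt (f y).
  by rewrite mem_filter => /andP [/asboolP fyx yS].
apply: (packing (x0 := x) (r := eps * wt x / 4)).
- by rewrite divr_gt0 // mulr_gt0 //; lra.
- by rewrite divr_ge0 // ltW.
- exact: filter_uniq.
- move=> y y' /inS' [yS /overlap_near [wxy _]] /inS' [y'S _] yy'.
  have := farS y y' yS y'S yy'; rewrite /weighted_far.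
  have : eps * wt x <= eps * (2 * wt y) by rewrite ler_wpM2l // ltW.
  lra.
- move=> y /inS' [_ /overlap_near [_ close]].
  have -> : 128 / a * (eps * wt x / 4) = 4 * t * wt x.
    by rewrite eps_eq; field; rewrite gt_eqF.
  exact: close.
Qed.

End ShiftedNet.

End AhlforsRegular.

Lemma sum_indic_filter (R : ringType) (T I : Type) (s : seq I) (E : I -> set T)
  (x : T) :
  \sum_(y <- s) (\1_(E y) x : R) = (size [seq y <- s | `[< E y x >]])%:R.
Proof.
elim: s => [|y s IH]; first by rewrite big_nil.
rewrite big_cons /= IH indicE; case: (pselect (E y x)) => Eyx.
  by rewrite mem_set // asboolT //= -[RHS]natr1 addrC.
by rewrite memNset // asboolF //= add0r.
Qed.

Theorem mainTheorem7 (R : realType) (dsp : measure_display) (X : measurableType dsp)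
  (dist : X -> X -> R) (m : {measure set X -> \bar R}) (D : R) (o : X) :
  is_metric dist ->
  (forall x r, measurable (mball dist x r)) ->
  0 < D ->
  ahlfors_regular dist m D ->
  let dd := fun x : X => 1 + dist o x in
  forall a : R, 0 < a -> a <= 1 ->
  exists2 C : R, 0 < C &
    forall t : R, 0 < t -> t <= 2^-1 ->
    forall g : X -> R, (forall x, 0 <= g x) -> loc_integrable dist m g ->
    exists s : seq X,
      [/\ forall xj, xj \in s -> t * dd xj <= 1,
          forall x : X, \sum_(xj <- s) (\1_(mball dist xj (t * dd xj)) x : R) <= C,
          forall x : X, t * dd x <= 2^-1 ->
            1 <= \sum_(xj <- s) (\1_(mball dist xj (a * t * dd xj)) x : R) &
          forall xj, xj \in s ->
            ((g xj)%:E <= (C / fine (m (mball dist xj (t * dd xj))))%:E *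
               \int[m]_(y in mball dist xj (t * dd xj)) (g y)%:E)%E].
Proof.
move=> hm mb D0 [A [A1 hA]] dd a a0 a1.
(* C1 bounds the overlap of the balls, C2 the constant in the mean estimate *)
pose C1 := A ^+ 2 * (128 / a) `^ D; pose C2 := 2 * A ^+ 2 * (16 / a) `^ D.
have A0 : 0 < A := A_gt0 A1.
have C10 : 0 < C1 by rewrite mulr_gt0 ?exprn_gt0 ?powR_gt0 ?divr_gt0.
have C20 : 0 < C2 by rewrite !mulr_gt0 ?exprn_gt0 ?powR_gt0 ?divr_gt0.
exists (C1 + C2); first exact: addr_gt0.
move=> t t0 t2 g g0 [mg _].
have [eps eps_def] : {eps : R | 8 * eps = a * t} by exists (a * t / 8); field.
have C2C : C2 <= C1 + C2 by rewrite lerDr ltW.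
have [S [f [sepS netS f_near f_mean]]] :=
  shifted_net_exists hm mb A1 hA o a0 a1 t0 t2 eps_def (ltW D0) mg g0 C2C.
exists (map f S); split.
- case: sepS => _ inS _ _ /mapP [y /inS yin ->].
  exact (shifted_in_range hm a0 a1 t0 t2 eps_def f_near yin).
- move=> x; rewrite big_map sum_indic_filter.
  apply: le_trans (shifted_overlap hm mb A1 hA a0 a1 t0 t2 eps_def sepS f_near x) _.
  by rewrite lerDl ltW.
- move=> x /(shifted_cover hm a0 a1 t0 t2 eps_def netS f_near) [y yS fyx].
  rewrite big_map sum_indic_filter.
  have : y \in [seq y <- S | `[< mball dist (f y) (a * t * (1 + dist o (f y))) x >]].
    by rewrite mem_filter yS andbT; apply/asboolP.
  by case: [seq _ <- S | _] => // z s' _ /=; rewrite -natr1 lerDr.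
- by move=> _ /mapP [y _ ->]; exact: f_mean.
Qed.
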